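(* Let $n,p\ge1$ be integers and let $A=A^{p+1}_{n+1}$ with the multiplication $\odot$ defined in the context. Then $\odot$ is associative and commutative, and $\langle A;\odot,\top\rangle$ is a commutative monoid with neutral element $\top=\langle(n,0),p\rangle$.
   Context: Order $\mathbb{Z}\times\mathbb{Z}$ lexicographically: $(m,r)\preccurlyeq(k,s)$ iff $m<k$, or $m=k$ and $r\le s$; addition/subtraction of pairs is componentwise, and $\min,\max$ of pairs refer to $\preccurlyeq$. For an integer $n\ge1$ let $L^\omega_{n+1}=\{(m,r)\in\mathbb{Z}^2:(0,0)\preccurlyeq(m,r)\preccurlyeq(n,0)\}$ with $x\ast y=\max\{(0,0),x+y-(n,0)\}$ and $x\to y=\min\{(n,0),(n,0)-x+y\}$. For an integer $p\ge1$ let $L_{p+1}=\{0,1,\dots,p\}$ with $\alpha\ast\beta=\max\{0,\alpha+\beta-p\}$. Define $$A=A^{p+1}_{n+1}=\{\langle(m,r),\alpha\rangle:(m,r)\in L^\omega_{n+1},\ \alpha\in\{0,p\}\}\cup\{\langle(m,r),\alpha\rangle:(0,0)\preccurlyeq(m,r)\preccurlyeq(n-1,0),\ 0<\alpha<p\}.$$ Put $\bot=\langle(n,0),0\rangle$, $\top=\langle(n,0),p\rangle$. For $a=\langle(m,r),\alpha\rangle$, $b=\langle(k,s),\beta\rangle\in A$ define $a\odot b$ by: (P1) if $\alpha,\beta\ge1$ and $\alpha+\beta>p$: $a\odot b=\langle(m,r)\ast(k,s),\alpha+\beta-p\rangle$; (P2) if $\alpha,\beta\ge1$ and $\alpha+\beta\le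 p$: $a\odot b=\langle\min\{(n,0),(2n-(m+k+1),-(r+s))\},0\rangle$; (P3) if $\alpha\ge1$, $\beta=0$: $a\odot b=\langle(m,r)\to(k,s),0\rangle$, and if $\alpha=0$, $\beta\ge1$: $a\odot b=\langle(k,s)\to(m,r),0\rangle$; (P4) if $\alpha=\beta=0$: $a\odot b=\langle\min\{(n,0),(m+k+1,r+s)\},0\rangle$. *)

From Stdlib Require Import ZArith Bool.
Open Scope Z_scope.

Definition lexle (x y : Z * Z) : Prop :=
  fst x < fst y \/ (fst x = fst y /\ snd x <= snd y).

Definition lexleb (x y : Z * Z) : bool :=
  (fst x <? fst y) || ((fst x =? fst y) && (snd x <=? snd y)).

Definition lexmin (x y : Z * Z) : Z * Z := if lexleb x y then x else y.
Definition lexmax (x y : Z * Z) : Z * Z := if lexleb x y then y else x.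

Definition padd (x y : Z * Z) : Z * Z := (fst x + fst y, snd x + snd y).
Definition psub (x y : Z * Z) : Z * Z := (fst x - fst y, snd x - snd y).

Definition lstar (n : Z) (x y : Z * Z) : Z * Z :=
  lexmax (0, 0) (psub (padd x y) (n, 0)).
Definition limp (n : Z) (x y : Z * Z) : Z * Z :=
  lexmin (n, 0) (padd (psub (n, 0) x) y).

Definition elt := ((Z * Z) * Z)%type.

Definition inA (n p : Z) (a : elt) : Prop :=
  let '(x, al) := a in
  (lexle (0, 0) x /\ lexle x (n, 0) /\ (al = 0 \/ al = p)) \/
  (lexle (0, 0) x /\ lexle x (n - 1, 0) /\ 0 < al < p).

Definition topA (n p : Z) : elt := ((n, 0), p).
Definition botA (n p : Z) : elt := ((n, 0), 0).

Definition odot (n p : Z) (a b : elt) : elt :=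
  let '((m, r), al) := a in
  let '((k, s), be) := b in
  if (1 <=? al) && (1 <=? be) then
    if p <? al + be then (lstar n (m, r) (k, s), al + be - p)
    else (lexmin (n, 0) (2 * n - (m + k + 1), - (r + s)), 0)
  else if (1 <=? al) && (be =? 0) then (limp n (m, r) (k, s), 0)
  else if (al =? 0) && (1 <=? be) then (limp n (k, s) (m, r), 0)
  else (lexmin (n, 0) (m + k + 1, r + s), 0).

(* Sort the elements of A by their second component: "negative" if alpha = 0,
   "positive" if alpha >= 1.  Which of the rules P1-P4 applies, and the
   second component of the product, depend on the alphas alone, and the first
   component is one of four truncated operations on the interval
   [(0,0), (n,0)] of the lexicographically ordered group Z x Z.  Hence each
   instance of associativity, once the sign pattern of the three factors and
   the relevant comparisons of alpha-sums with p are fixed, becomes an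
   identity between these truncated operations (associativity of the
   truncated sums, residuation, exchange, ...), which is checked by splitting
   every lexicographic min and max and solving the resulting linear
   arithmetic. *)
From Stdlib Require Import ZArith Lia Bool.
Open Scope Z_scope.

Lemma lexlebP x y : reflect (lexle x y) (lexleb x y).
Proof.
apply iff_reflect; unfold lexleb, lexle.
rewrite orb_true_iff, andb_true_iff, Z.ltb_lt, Z.eqb_eq, Z.leb_le; reflexivity.
Qed.

Lemma lexle_total x y : ~ lexle x y -> lexle y x.
Proof. destruct x as [a b], y as [c d]; unfold lexle; cbn; lia. Qed.

Lemma lexmin_cases x y :
  (lexle x y /\ lexmin x y = x) \/ (lexle y x /\ lexmin x y = y).
Proof. unfold lexmin; destruct (lexlebP x y); auto using lexle_total. Qed.

Lemma lexmax_cases x y :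
  (lexle x y /\ lexmax x y = y) \/ (lexle y x /\ lexmax x y = x).
Proof. unfold lexmax; destruct (lexlebP x y); auto using lexle_total. Qed.

Definition inL (n : Z) (x : Z * Z) : Prop := lexle (0, 0) x /\ lexle x (n, 0).

Definition lsum1 (n : Z) (x y : Z * Z) : Z * Z :=
  lexmin (n, 0) (fst x + fst y + 1, snd x + snd y).
Definition lcosum1 (n : Z) (x y : Z * Z) : Z * Z :=
  lexmin (n, 0) (2 * n - (fst x + fst y + 1), - (snd x + snd y)).

Ltac lex_free t :=
  lazymatch t with
  | context [lexmin _ _] => fail
  | context [lexmax _ _] => fail
  | _ => idtac
  end.

(* Innermost min/max first, so that the case hypotheses never mention an
   unresolved min/max. *)
Ltac lex_solve :=
  unfold inL, lstar, limp, lsum1, lcosum1, padd, psub in *;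
  repeat match goal with x : (Z * Z)%type |- _ => destruct x end;
  cbn [fst snd] in *;
  repeat match goal with
  | |- context [lexmin ?x ?y] => lex_free x; lex_free y;
      destruct (lexmin_cases x y) as [[? ->] | [? ->]]
  | |- context [lexmax ?x ?y] => lex_free x; lex_free y;
      destruct (lexmax_cases x y) as [[? ->] | [? ->]]
  end;
  unfold lexle in *; cbn [fst snd] in *;
  try match goal with |- (_, _) = (_, _) => f_equal end;
  lia.

Section TruncatedOperations.

Variable n : Z.

Lemma inL_lstar x y : inL n x -> inL n y -> inL n (lstar n x y).
Proof. intros; lex_solve. Qed.

Lemma lstar_le_pred x y :
  inL n x -> inL n y -> lexle x (n - 1, 0) -> lexle (lstar n x y) (n - 1, 0).
Proof. intros; lex_solve. Qed.

Lemma inL_limp x y : inL n x -> inL n y -> inL n (limp n x y).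
Proof. intros; lex_solve. Qed.

Lemma inL_lsum1 x y : inL n x -> inL n y -> inL n (lsum1 n x y).
Proof. intros; lex_solve. Qed.

Lemma inL_lcosum1 x y : inL n x -> inL n y ->
  lexle x (n - 1, 0) -> lexle y (n - 1, 0) -> inL n (lcosum1 n x y).
Proof. intros; lex_solve. Qed.

Lemma lstar_top_l x : inL n x -> lstar n (n, 0) x = x.
Proof. intros; lex_solve. Qed.

Lemma limp_top_l x : inL n x -> limp n (n, 0) x = x.
Proof. intros; lex_solve. Qed.

Lemma lstar_comm x y : inL n x -> inL n y -> lstar n x y = lstar n y x.
Proof. intros; lex_solve. Qed.

Lemma lsum1_comm x y : inL n x -> inL n y -> lsum1 n x y = lsum1 n y x.
Proof. intros; lex_solve. Qed.

Lemma lcosum1_comm x y : inL n x -> inL n y -> lcosum1 n x y = lcosum1 n y x.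
Proof. intros; lex_solve. Qed.

Lemma lstar_assoc x y z : inL n x -> inL n y -> inL n z ->
  lstar n (lstar n x y) z = lstar n x (lstar n y z).
Proof. intros; lex_solve. Qed.

Lemma lsum1_assoc x y z : inL n x -> inL n y -> inL n z ->
  lsum1 n (lsum1 n x y) z = lsum1 n x (lsum1 n y z).
Proof. intros; lex_solve. Qed.

Lemma limp_lsum1 x y z : inL n x -> inL n y -> inL n z ->
  limp n z (lsum1 n x y) = lsum1 n x (limp n z y).
Proof. intros; lex_solve. Qed.

Lemma limp_lstar x y z : inL n x -> inL n y -> inL n z ->
  limp n (lstar n x y) z = limp n x (limp n y z).
Proof. intros; lex_solve. Qed.

Lemma lsum1_lcosum1 x y z : inL n x -> inL n y -> inL n z ->
  lsum1 n (lcosum1 n x y) z = limp n x (limp n y z).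
Proof. intros; lex_solve. Qed.

Lemma limp_exchange x y z : inL n x -> inL n y -> inL n z ->
  limp n x (limp n y z) = limp n y (limp n x z).
Proof. intros; lex_solve. Qed.

Lemma lcosum1_lstar x y z : inL n x -> inL n y -> inL n z ->
  lexle x (n - 1, 0) -> lexle z (n - 1, 0) ->
  lcosum1 n (lstar n x y) z = lcosum1 n x (lstar n y z).
Proof. intros; lex_solve. Qed.

Lemma lcosum1_lstar_limp x y z : inL n x -> inL n y -> inL n z ->
  lexle y (n - 1, 0) -> lexle z (n - 1, 0) ->
  lcosum1 n (lstar n x y) z = limp n x (lcosum1 n y z).
Proof. intros; lex_solve. Qed.

Lemma limp_lcosum1 x y z : inL n x -> inL n y -> inL n z ->
  lexle x (n - 1, 0) -> lexle y (n - 1, 0) -> lexle z (n - 1, 0) ->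
  limp n z (lcosum1 n x y) = limp n x (lcosum1 n y z).
Proof. intros; lex_solve. Qed.

End TruncatedOperations.

Lemma inA_iff n p (hp : 1 <= p) x al : inA n p (x, al) <->
  inL n x /\ (al = 0 \/ 1 <= al <= p /\ (al < p -> lexle x (n - 1, 0))).
Proof.
destruct x as [m r]; unfold inA, inL, lexle; cbn [fst snd].
split; [intros [H | H] | intros [H [H' | H']]]; lia.
Qed.

Section Odot.

Variables n p : Z.
Hypothesis hp : 1 <= p.

Local Infix "⊙" := (odot n p) (at level 40, left associativity).

Ltac decide_tests :=
  repeat match goal with
  | |- context [?a <=? ?b] => destruct (Z.leb_spec a b)
  | |- context [?a <? ?b] => destruct (Z.ltb_spec a b)
  | |- context [?a =? ?b] => destruct (Z.eqb_spec a b)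
  end; cbn [andb]; try lia.

Lemma odot_pos_high x y al be : 1 <= al -> 1 <= be -> p < al + be ->
  (x, al) ⊙ (y, be) = (lstar n x y, al + be - p).
Proof. destruct x, y; intros; unfold odot; decide_tests; reflexivity. Qed.

Lemma odot_pos_low x y al be : 1 <= al -> 1 <= be -> al + be <= p ->
  (x, al) ⊙ (y, be) = (lcosum1 n x y, 0).
Proof. destruct x, y; intros; unfold odot; decide_tests; reflexivity. Qed.

Lemma odot_pos_neg x y al : 1 <= al -> (x, al) ⊙ (y, 0) = (limp n x y, 0).
Proof. destruct x, y; intros; unfold odot; decide_tests; reflexivity. Qed.

Lemma odot_neg_pos x y be : 1 <= be -> (x, 0) ⊙ (y, be) = (limp n y x, 0).
Proof. destruct x, y; intros; unfold odot; decide_tests; reflexivity. Qed.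

Lemma odot_neg_neg x y : (x, 0) ⊙ (y, 0) = (lsum1 n x y, 0).
Proof. destruct x, y; reflexivity. Qed.

Ltac odot_simpl :=
  repeat first
    [ rewrite odot_neg_neg
    | rewrite odot_pos_neg by lia
    | rewrite odot_neg_pos by lia
    | rewrite odot_pos_high by lia
    | rewrite odot_pos_low by lia ].

Lemma odot_closed a b : inA n p a -> inA n p b -> inA n p (a ⊙ b).
Proof.
destruct a as [x al], b as [y be]; intros Ha Hb.
apply (inA_iff n p hp) in Ha as [Hx [-> | [Hal Hxp]]], Hb as [Hy [-> | [Hbe Hyp]]].
- rewrite odot_neg_neg; apply (inA_iff n p hp); split; [apply inL_lsum1 | left]; auto.
- rewrite odot_neg_pos by lia; apply (inA_iff n p hp); split; [apply inL_limp | left]; auto.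
- rewrite odot_pos_neg by lia; apply (inA_iff n p hp); split; [apply inL_limp | left]; auto.
- destruct (Z_lt_le_dec p (al + be)).
  + rewrite odot_pos_high by lia; apply (inA_iff n p hp).
    split; [apply inL_lstar; auto | right; split; [lia | intros]].
    destruct (Z_lt_le_dec al p).
    * apply lstar_le_pred; auto.
    * rewrite lstar_comm by auto; apply lstar_le_pred; auto; apply Hyp; lia.
  + rewrite odot_pos_low by lia; apply (inA_iff n p hp).
    split; [apply inL_lcosum1; auto; [apply Hxp | apply Hyp]; lia | left; auto].
Qed.

Lemma odot_comm a b : inA n p a -> inA n p b -> a ⊙ b = b ⊙ a.
Proof.
destruct a as [x al], b as [y be]; intros Ha Hb.
apply (inA_iff n p hp) in Ha as [Hx [-> | [Hal _]]], Hb as [Hy [-> | [Hbe _]]].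
- rewrite !odot_neg_neg, lsum1_comm by assumption; reflexivity.
- rewrite odot_neg_pos, odot_pos_neg by lia; reflexivity.
- rewrite odot_neg_pos, odot_pos_neg by lia; reflexivity.
- destruct (Z_lt_le_dec p (al + be)).
  + rewrite !odot_pos_high, lstar_comm by (assumption || lia); f_equal; lia.
  + rewrite !odot_pos_low, lcosum1_comm by (assumption || lia); reflexivity.
Qed.

Lemma inA_top : 0 <= n -> inA n p (topA n p).
Proof. intros; apply (inA_iff n p hp); unfold inL, lexle; cbn; lia. Qed.

Lemma odot_top_l a : inA n p a -> topA n p ⊙ a = a.
Proof.
destruct a as [x al]; unfold topA; intros Ha.
apply (inA_iff n p hp) in Ha as [Hx [-> | [Hal _]]].
- rewrite odot_pos_neg, limp_top_l by auto; reflexivity.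
- rewrite odot_pos_high, lstar_top_l by (assumption || lia); f_equal; lia.
Qed.

Ltac side_bound :=
  solve [ assumption
        | match goal with H : _ < p -> ?g |- ?g => apply H; lia end
        | apply inL_lstar; side_bound
        | apply inL_limp; side_bound
        | apply inL_lcosum1; side_bound ].

Lemma odot_assoc_pos x y z al be ga :
  inL n x -> inL n y -> inL n z -> 1 <= al <= p -> 1 <= be <= p -> 1 <= ga <= p ->
  (al < p -> lexle x (n - 1, 0)) -> (be < p -> lexle y (n - 1, 0)) ->
  (ga < p -> lexle z (n - 1, 0)) ->
  (x, al) ⊙ (y, be) ⊙ (z, ga) = (x, al) ⊙ ((y, be) ⊙ (z, ga)).
Proof.
intros Hx Hy Hz Hal Hbe Hga Hxp Hyp Hzp.
destruct (Z_lt_le_dec p (al + be)), (Z_lt_le_dec p (be + ga)).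
- destruct (Z_lt_le_dec (2 * p) (al + be + ga)); odot_simpl.
  + rewrite lstar_assoc by assumption; f_equal; lia.
  + rewrite lcosum1_lstar by side_bound; reflexivity.
- odot_simpl; rewrite lcosum1_lstar_limp by side_bound; reflexivity.
- odot_simpl.
  rewrite (lcosum1_comm n x (lstar n y z)), (lstar_comm n y z), lcosum1_lstar_limp,
    (lcosum1_comm n y x) by side_bound; reflexivity.
- odot_simpl; rewrite limp_lcosum1 by side_bound; reflexivity.
Qed.

Lemma odot_assoc a b c : inA n p a -> inA n p b -> inA n p c ->
  a ⊙ b ⊙ c = a ⊙ (b ⊙ c).
Proof.
destruct a as [x al], b as [y be], c as [z ga]; intros Ha Hb Hc.
apply (inA_iff n p hp) in Ha as [Hx [-> | [Hal Hxp]]], Hb as [Hy [-> | [Hbe Hyp]]],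
  Hc as [Hz [-> | [Hga Hzp]]].
- odot_simpl; rewrite lsum1_assoc by side_bound; reflexivity.
- odot_simpl; rewrite limp_lsum1 by side_bound; reflexivity.
- odot_simpl.
  rewrite (lsum1_comm n (limp n y x) z), <- !limp_lsum1, (lsum1_comm n z x)
    by side_bound; reflexivity.
- destruct (Z_lt_le_dec p (be + ga)); odot_simpl.
  + rewrite limp_lstar, (limp_exchange n z y x) by side_bound; reflexivity.
  + rewrite (lsum1_comm n x), lsum1_lcosum1, (limp_exchange n z y x)
      by side_bound; reflexivity.
- odot_simpl.
  rewrite (lsum1_comm n y z), limp_lsum1, (lsum1_comm n (limp n x y) z)
    by side_bound; reflexivity.
- odot_simpl; rewrite (limp_exchange n z x y) by side_bound; reflexivity.
- destruct (Z_lt_le_dec p (al + be)); odot_simpl.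
  + rewrite limp_lstar by side_bound; reflexivity.
  + rewrite lsum1_lcosum1 by side_bound; reflexivity.
- apply odot_assoc_pos; assumption.
Qed.

End Odot.

Theorem mainTheorem3 (n p : Z) (hn : 1 <= n) (hp : 1 <= p) :
  (forall a b, inA n p a -> inA n p b -> inA n p (odot n p a b)) /\
  (forall a b c, inA n p a -> inA n p b -> inA n p c ->
     odot n p (odot n p a b) c = odot n p a (odot n p b c)) /\
  (forall a b, inA n p a -> inA n p b -> odot n p a b = odot n p b a) /\
  inA n p (topA n p) /\
  (forall a, inA n p a -> odot n p (topA n p) a = a /\ odot n p a (topA n p) = a).
Proof.
split; [exact (odot_closed n p hp) |].
split; [exact (odot_assoc n p hp) |].
split; [exact (odot_comm n p hp) |].
assert (top_in_A : inA n p (topA n p)) by (apply inA_top; lia).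
split; [exact top_in_A |].
intros a Ha; rewrite (odot_comm n p hp a) by assumption.
split; apply (odot_top_l n p hp a Ha).
Qed.
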